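(* Let $K\ge 2$, $0<q<p$ with $p+(K-1)q=1$, and $\phi\in\Delta$. Suppose the smallest entry of $\phi$, say $\phi_m$, satisfies $\phi_m<q$, and the second smallest entry of $\phi$ is at least $\frac{Kq-\phi_m}{K-1}$. Then the three points $\mathrm{InvP}(\phi)$, $\mathrm{MLE}^*(\phi)$, $\mathrm{InvN}(\phi)$ of $\mathbb{R}^K$ are collinear, and $\mathrm{MLE}^*(\phi)$ lies between $\mathrm{InvP}(\phi)$ and $\mathrm{InvN}(\phi)$ (on the segment joining them).
   Context: $\Delta=\{\theta\in\mathbb{R}^K:\theta_i\ge 0,\ \sum_i\theta_i=1\}$. $p,q$ are the parameters of the randomized response mechanism ($p$ = probability of reporting the true value, $q$ = probability of reporting each other value). Estimators: $\mathrm{Inv}(\phi)_i=\frac{\phi_i-q}{p-q}$; $\mathrm{InvN}(\phi)_i=\frac{\max(0,\mathrm{Inv}(\phi)_i)}{\sum_j\max(0,\mathrm{Inv}(\phi)_j)}$; $\mathrm{InvP}(\phi)=\arg\min_{\theta\in\Delta}\|\theta-\mathrm{Inv}(\phi)\|_2$ (Euclidean projection onto $\Delta$). $\mathrm{MLE}^*(\phi)$: for real $\tau$ let $m(\tau)=|\{i:\phi_i<\tau\}|$ and $c_\tau=\frac{1-m(\tau)q}{\sum_{i:\phi_i\ge\tau}\phi_i}$; let $\tau^*$ be the smallest $\tau\in\{\phi_1,\dots,\phi_K\}$ such that $c_\tau\phi_i\ge q$ for all $i$ with $\phi_i\ge\tau$; then $\mathrm{MLE}^*(\phi)_i=0$ if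 $\phi_i<\tau^*$ and $\frac{c_{\tau^*}\phi_i-q}{p-q}$ otherwise. *)

From HB Require Import structures.
From mathcomp Require Import all_boot all_order all_algebra.
Set Implicit Arguments. Unset Strict Implicit. Unset Printing Implicit Defensive.
Import Order.TTheory GRing.Theory Num.Theory.
Local Open Scope ring_scope.

Section RR.
Variable R : realFieldType.
Variable K : nat.

Definition in_simplex (th : 'I_K -> R) : Prop :=
  (forall i, 0 <= th i) /\ \sum_(i < K) th i = 1.

Definition Inv (p q : R) (phi : 'I_K -> R) : 'I_K -> R :=
  fun i => (phi i - q) / (p - q).

Definition InvN (p q : R) (phi : 'I_K -> R) : 'I_K -> R :=
  fun i => Num.max 0 (Inv p q phi i) / \sum_(j < K) Num.max 0 (Inv p q phi j).

Definition sqdist (x y : 'I_K -> R) : R := \sum_(i < K) (x i - y i) ^+ 2.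

Definition is_proj_simplex (x th : 'I_K -> R) : Prop :=
  in_simplex th /\ forall th', in_simplex th' -> sqdist th x <= sqdist th' x.

Definition mcount (phi : 'I_K -> R) (tau : R) : nat := #|[pred i | phi i < tau]|.

Definition ctau (q : R) (phi : 'I_K -> R) (tau : R) : R :=
  (1 - (mcount phi tau)%:R * q) / \sum_(i < K | tau <= phi i) phi i.

Definition admissible (q : R) (phi : 'I_K -> R) (tau : R) : bool :=
  [forall i : 'I_K, (tau <= phi i) ==> (q <= ctau q phi tau * phi i)].

(* tau^* = smallest admissible tau among phi_1..phi_K
   (defaults to 0 if there is none; irrelevant where it is used) *)
Definition tau_star (q : R) (phi : 'I_K -> R) : R :=
  let s := [seq phi i | i <- enum 'I_K & admissible q phi (phi i)] in
  \big[Num.min/head 0 s]_(x <- s) x.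

Definition MLEstar (p q : R) (phi : 'I_K -> R) : 'I_K -> R :=
  fun i => let t := tau_star q phi in
    if phi i < t then 0 else (ctau q phi t * phi i - q) / (p - q).

End RR.

From mathcomp Require Import all_boot all_order all_algebra.
From mathcomp Require Import ring lra.
Set Implicit Arguments.
Unset Strict Implicit.
Unset Printing Implicit Defensive.

Import Order.TTheory GRing.Theory Num.Theory.
Local Open Scope ring_scope.

(* Off the smallest entry m all three estimators vanish at m and are affine in
   phi_i.  The projection shifts Inv by the common amount Inv_m / (K - 1): these
   are its Kuhn-Tucker conditions, and the hypothesis on the second smallest
   entry says exactly that the shifted entries stay nonnegative.  InvN rescales
   Inv by 1 / (1 - Inv_m).  For MLE*, c = 1 at the threshold phi_m, so phi_m is
   not admissible, while every threshold above phi_m and up to the second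
   smallest entry is, so MLE* rescales phi by c = (1 - q) / (1 - phi_m).
   Comparing coefficients, MLE* = (1 - t) InvP + t InvN with
   t = (p - phi_m) / (1 - phi_m). *)

Section SimplexProjection.
Variables (R : realFieldType) (K : nat).
Implicit Types x y P th : 'I_K -> R.

Lemma sqdist_ge0 x y : 0 <= sqdist x y.
Proof. by apply: sumr_ge0 => i _; apply: sqr_ge0. Qed.

Lemma sqdist_eq0 x y : sqdist x y = 0 -> x =1 y.
Proof.
move=> /psumr_eq0P xy i; apply/eqP; rewrite -subr_eq0 -sqrf_eq0.
by apply/eqP/xy => // j _; apply: sqr_ge0.
Qed.

Lemma sqdist_split th P x : sqdist th x =
  sqdist th P + sqdist P x + 2 * \sum_i (th i - P i) * (P i - x i).
Proof.
by rewrite /sqdist mulr_sumr -!big_split; apply: eq_bigr => i _ /=; ring.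
Qed.

Lemma proj_simplex_variational x P th :
  in_simplex P ->
  (forall th', in_simplex th' -> 0 <= \sum_i (th' i - P i) * (P i - x i)) ->
  is_proj_simplex x th -> th =1 P.
Proof.
move=> P_simplex P_var [th_simplex th_min]; apply: sqdist_eq0.
have := th_min P P_simplex; rewrite (sqdist_split th P).
have := P_var th th_simplex; have := sqdist_ge0 th P; lra.
Qed.

Lemma proj_simplex_shift x P (lam : R) th :
  in_simplex P -> (forall i, lam <= P i - x i) ->
  (forall i, P i != 0 -> P i - x i = lam) ->
  is_proj_simplex x th -> th =1 P.
Proof.
move=> P_simplex lam_le lam_eq; apply: proj_simplex_variational => //.
move=> th' [th'_ge0 th'_sum1]; have [_ P_sum1] := P_simplex.
rewrite [leLHS](_ : _ = lam * \sum_i th' i - lam * \sum_i P i); last first.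
  by rewrite th'_sum1 P_sum1 subrr.
rewrite !mulr_sumr -sumrB; apply: ler_sum => i _.
have [P0|/lam_eq P_eq] := eqVneq (P i) 0.
  have := lam_le i; rewrite P0 mulr0 !subr0 !sub0r => lam_le_i.
  by rewrite mulrC ler_wpM2l.
by rewrite P_eq -mulrBr mulrC.
Qed.

End SimplexProjection.

Lemma sumr_neq (R : zmodType) (K : nat) (m : 'I_K) (F : 'I_K -> R) :
  \sum_(i | i != m) F i = \sum_i F i - F m.
Proof. by rewrite [in RHS](bigD1 m) //= addrAC subrr add0r. Qed.

Lemma sum_Inv (R : realFieldType) (K : nat) (p q : R) (phi : 'I_K -> R) :
  (0 < K)%N -> p != q -> p + (K - 1)%:R * q = 1 -> \sum_i phi i = 1 ->
  \sum_i Inv p q phi i = 1.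
Proof.
move=> K_gt0 p_neq_q pq1 phi_sum1.
have natK : K%:R = (K - 1)%:R + 1 :> R by rewrite natr1 subn1 prednK.
rewrite /Inv -mulr_suml sumrB phi_sum1 sumr_const card_ord -mulr_natl.
by rewrite -{1}pq1 natK; field; rewrite subr_eq0.
Qed.

Section Threshold.
Variables (R : realFieldType) (K : nat) (q : R) (phi : 'I_K -> R).

Lemma tau_star_le j : admissible q phi (phi j) -> tau_star q phi <= phi j.
Proof.
move=> adm_j; apply: ge_bigmin_seq => //.
by rewrite map_f // mem_filter adm_j mem_enum.
Qed.

Lemma tau_star_gt (a : R) j : admissible q phi (phi j) ->
  (forall i, admissible q phi (phi i) -> a < phi i) -> a < tau_star q phi.
Proof.
move=> adm_j adm_gt; rewrite /tau_star big_seq.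
set s := [seq _ | _ <- _ & _].
have s_gt v : v \in s -> a < v.
  by case/mapP=> i; rewrite mem_filter => /andP[/adm_gt a_lt _] ->.
have j_in_s : phi j \in s by rewrite map_f // mem_filter adm_j mem_enum.
apply: lt_bigmin => [|v]; last exact: s_gt.
apply: s_gt.
by move: j_in_s; case: (s) => // v ? _; apply: mem_head.
Qed.

Hypothesis phi_sum1 : \sum_i phi i = 1.

Lemma ctau_at_min m : (forall i, phi m <= phi i) -> ctau q phi (phi m) = 1.
Proof.
move=> phi_m_min; rewrite /ctau.
have -> : mcount phi (phi m) = 0%N.
  by apply: eq_card0 => i; rewrite !inE ltNge phi_m_min.
by rewrite (eq_bigl xpredT) ?phi_sum1 ?mul0r ?subr0 ?divr1.
Qed.

Lemma ctau_above_min m T : phi m < T -> (forall i, i != m -> T <= phi i) ->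
  ctau q phi T = (1 - q) / (1 - phi m).
Proof.
move=> m_lt_T T_le; rewrite /ctau.
have T_leE i : (T <= phi i) = (i != m).
  by have [->|/T_le ->] := eqVneq i m; rewrite // leNgt m_lt_T.
have -> : mcount phi T = 1%N.
  rewrite /mcount -(card1 m); apply: eq_card => i.
  by rewrite !inE ltNge T_leE negbK.
by rewrite (eq_bigl _ _ T_leE) sumr_neq phi_sum1 mul1r.
Qed.

End Threshold.

Section OneEntryBelowQ.
Variables (R : realFieldType) (K : nat) (p q : R) (phi : 'I_K -> R) (m : 'I_K).
Hypotheses (K_ge2 : (2 <= K)%N) (q_gt0 : 0 < q) (q_lt_p : q < p).
Hypothesis pq1 : p + (K - 1)%:R * q = 1.
Hypothesis phi_sum1 : \sum_i phi i = 1.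
Hypotheses (phi_m_min : forall i, phi m <= phi i) (phi_m_lt_q : phi m < q).
Hypothesis phi_second :
  forall i, i != m -> (K%:R * q - phi m) / (K - 1)%:R <= phi i.

Local Notation r := ((K - 1)%:R : R).
Local Notation a := (phi m).
Local Notation x := (Inv p q phi).

Let natK : K%:R = r + 1.
Proof. by rewrite natr1 subn1 prednK // ltnW. Qed.

Let r_gt0 : 0 < r.
Proof. by rewrite ltr0n subn_gt0. Qed.

Let r_neq0 : r != 0.
Proof. exact: lt0r_neq0. Qed.

Let pq_neq0 : p - q != 0.
Proof. by rewrite subr_eq0 gt_eqF. Qed.

Let p_eq : p = 1 - r * q.
Proof. by move: pq1; lra. Qed.

Let p_le1 : p <= 1.
Proof. by have := mulr_ge0 (ltW r_gt0) (ltW q_gt0); move: p_eq; lra. Qed.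

Let a_lt_p : a < p.
Proof. exact: lt_trans phi_m_lt_q q_lt_p. Qed.

Let a_lt1 : a < 1.
Proof. exact: lt_le_trans a_lt_p p_le1. Qed.

Lemma phi_second_lb i : i != m -> (r + 1) * q - a <= r * phi i.
Proof. by move/phi_second; rewrite ler_pdivrMr // natK [_ * r]mulrC. Qed.

Lemma q_lt_phi i : i != m -> q < phi i.
Proof.
move/phi_second_lb => lb; rewrite -(ltr_pM2l r_gt0).
by move: phi_m_lt_q; lra.
Qed.

Lemma Inv_min_lt0 : x m < 0.
Proof. by rewrite pmulr_llt0 ?invr_gt0 ?subr_gt0 // subr_lt0. Qed.

Lemma Inv_ge0 i : i != m -> 0 <= x i.
Proof.
move/q_lt_phi => q_lt_phi_i.
by rewrite divr_ge0 // subr_ge0 ltW.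
Qed.

Lemma Inv_sum1 : \sum_i x i = 1.
Proof. by rewrite sum_Inv ?gt_eqF // ltnW. Qed.

Definition InvP_formula i := if i == m then 0 else x i + x m / r.

Lemma InvP_formula_ge0 i : 0 <= InvP_formula i.
Proof.
rewrite /InvP_formula; case: eqVneq => // /phi_second_lb lb.
have -> : x i + x m / r = (r * phi i - (r + 1) * q + a) / (r * (p - q)).
  by rewrite /Inv; field; rewrite pq_neq0 r_neq0.
apply: divr_ge0; first by move: lb; lra.
by rewrite mulr_ge0 // ltW // subr_gt0.
Qed.

Lemma InvP_formula_sum1 : \sum_i InvP_formula i = 1.
Proof.
rewrite (bigD1 m) //= /InvP_formula eqxx add0r.
rewrite (eq_bigr (fun i => x i + x m / r)) => [|i /negbTE -> //].
rewrite big_split /= !sumr_neq Inv_sum1 sumr_const card_ord -[_ *+ K]mulr_natl.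
by rewrite natK; field.
Qed.

Lemma InvP_eq th : is_proj_simplex x th -> th =1 InvP_formula.
Proof.
have xm_le0 := ltW Inv_min_lt0.
apply: (@proj_simplex_shift _ _ _ _ (x m / r)).
- by split; [apply: InvP_formula_ge0 | apply: InvP_formula_sum1].
- move=> i; rewrite /InvP_formula; case: (eqVneq i m) => [->|_].
    by rewrite sub0r (@le_trans _ _ 0) ?oppr_ge0 // pmulr_lle0 ?invr_gt0.
  by rewrite addrAC subrr add0r.
- move=> i; rewrite /InvP_formula; case: (eqVneq i m) => [->|_ _].
    by rewrite eqxx.
  by rewrite addrAC subrr add0r.
Qed.

Lemma min_not_admissible : ~~ admissible q phi a.
Proof.
apply/forallP => /(_ m); rewrite lexx /= (ctau_at_min q phi_sum1 phi_m_min).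
by rewrite mul1r leNgt phi_m_lt_q.
Qed.

Lemma admissible_above_min T :
  a < T -> (forall i, i != m -> T <= phi i) -> admissible q phi T.
Proof.
move=> a_lt_T T_le; apply/forallP => i; apply/implyP => T_le_i.
have i_neq_m : i != m by apply: contraTneq T_le_i => ->; rewrite -ltNge.
rewrite (ctau_above_min q phi_sum1 a_lt_T T_le) mulrAC ler_pdivlMr ?subr_gt0 //.
suff : 0 <= r * ((1 - q) * phi i - q * (1 - a)) by rewrite pmulr_rge0 // subr_ge0.
have -> : r * ((1 - q) * phi i - q * (1 - a)) =
    (1 - q) * (r * phi i - ((r + 1) * q - a)) + (q - a) * (p - q).
  by rewrite p_eq; ring.
have lb := phi_second_lb i_neq_m.
have q_le1 : q <= 1 := le_trans (ltW q_lt_p) p_le1.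
by rewrite addr_ge0 ?mulr_ge0 ?subr_ge0 // ltW.
Qed.

Lemma tau_star_between :
  a < tau_star q phi /\ forall i, i != m -> tau_star q phi <= phi i.
Proof.
have [j1 j1_neq_m] : exists j, j != m.
  have : (0 < #|predC1 m|)%N by rewrite cardC1 card_ord -subn1 subn_gt0.
  by case/card_gt0P => j; exists j.
have [j0 j0_neq_m j0_min] := @arg_minP _ _ _ j1 (predC1 m) phi j1_neq_m.
have adm_j0 : admissible q phi (phi j0).
  apply: admissible_above_min j0_min.
  by apply: lt_trans (q_lt_phi j0_neq_m).
split; last by move=> i /j0_min; apply: le_trans (tau_star_le adm_j0).
apply: (tau_star_gt adm_j0) => i adm_i.
have [i_eq_m|/q_lt_phi] := eqVneq i m.
  by move: adm_i min_not_admissible; rewrite i_eq_m => ->.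
exact: lt_trans.
Qed.

Lemma MLEstar_eq i : MLEstar p q phi i =
  if i == m then 0 else ((1 - q) / (1 - a) * phi i - q) / (p - q).
Proof.
have [a_lt_tau tau_le] := tau_star_between.
rewrite /MLEstar /= (ctau_above_min q phi_sum1 a_lt_tau tau_le).
by case: (eqVneq i m) => [->|/tau_le]; [rewrite a_lt_tau | rewrite ltNge => ->].
Qed.

Lemma InvN_eq i : InvN p q phi i = if i == m then 0 else x i / (1 - x m).
Proof.
have xm_le0 := ltW Inv_min_lt0; rewrite /InvN.
have -> : \sum_j Num.max 0 (x j) = 1 - x m.
  rewrite (bigD1 m) //= max_l // add0r -Inv_sum1 -sumr_neq.
  by apply: eq_bigr => j /Inv_ge0 /max_r.
case: (eqVneq i m) => [->|/Inv_ge0 /max_r -> //].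
by rewrite max_l // mul0r.
Qed.

Lemma MLEstar_on_segment th : is_proj_simplex x th ->
  exists2 t : R, 0 <= t <= 1 &
    forall i, MLEstar p q phi i = (1 - t) * th i + t * InvN p q phi i.
Proof.
move=> th_proj; exists ((p - a) / (1 - a)).
  by rewrite divr_ge0 ?ler_pdivrMr ?mul1r /=; move: p_le1 a_lt_p; lra.
move=> i; rewrite MLEstar_eq InvN_eq (InvP_eq th_proj) /InvP_formula.
case: (eqVneq i m) => _; first by rewrite !mulr0 addr0.
rewrite /Inv p_eq; field.
by rewrite -p_eq opprB addrA subrK r_neq0 pq_neq0 !subr_eq0 !gt_eqF.
Qed.

End OneEntryBelowQ.

Theorem theorem2 (R : realFieldType) (K : nat) (p q : R) (phi : 'I_K -> R)
  (m : 'I_K) (thP : 'I_K -> R) :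
  (2 <= K)%N ->
  0 < q -> q < p -> p + (K - 1)%:R * q = 1 ->
  in_simplex phi ->
  (forall i, phi m <= phi i) ->
  phi m < q ->
  (forall i, i != m -> (K%:R * q - phi m) / (K - 1)%:R <= phi i) ->
  is_proj_simplex (Inv p q phi) thP ->
  exists2 t : R, 0 <= t <= 1 &
    forall i, MLEstar p q phi i = (1 - t) * thP i + t * InvN p q phi i.
Proof.
move=> K_ge2 q_gt0 q_lt_p pq1 [_ phi_sum1] phi_m_min phi_m_lt_q phi_second.
exact: MLEstar_on_segment.
Qed.
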